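(* (a) Let $\Gamma$ be a perfect matching drawing containing a matching edge $e=uv$ inside a disk $D$ that meets $\Gamma$ only in $e$, its endpoints, and initial segments of the four other edges at $u$ and $v$. Let the edge-ends of these other edges be $\alpha,\beta$ at $u$ and $\gamma,\delta$ at $v$, in cyclic order $\alpha,\beta,\delta,\gamma$ around $\partial D$. Let $\Gamma_H$ be obtained by the IH-move at $e$: inside $D$, replace $u,v,e$ by new vertices $u',v'$ and a new matching edge $e'=u'v'$, with $\alpha,\gamma$ attached to $u'$ and $\beta,\delta$ attached to $v'$. Let $\Gamma_{\mathrm{I}}$ be obtained from $\Gamma$ by replacing the contents of $D$ with two disjoint arcs joining $\alpha$ to $\gamma$ and $\beta$ to $\delta$, and let $\Gamma_{=}$ be obtained by replacing the contents of $D$ with two disjoint arcs joining $\alpha$ to $\beta$ and $\gamma$ to $\delta$. Then $$\langle\Gamma\rangle_2-\langle\Gamma_H\rangle_2=\langle\Gamma_{\mathrm{I}}\rangle_2-\langle\Gamma_{=}\rangle_2.$$ (b) Let $G_1$ be a planar trivalent graph with perfect matching $M_1$, and perform the same local constructions on a plane embedding, at a matching edge $e=uv$ as in (a), producing a plane graph $G_2$ with perfect matching $M_2=(M_1\setminus\{e\})\cup\{e'\}$ (the IH-move), a plane graph $G_3$ (delete $u,v,e$ and join the edges ending in $\alpha,\gamma$ into one edge and the edges ending in $\beta,\delta$ into one edge) with perfect matching $M_3=M_1\setminus\{e\}$, and a plane graph $G_4$ (delete $u,v,e$ and join the edges ending in $\alpha,\beta$ into one edge and those ending in $\gamma,\delta$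 into one edge) with perfect matching $M_4=M_1\setminus\{e\}$. Then $$|G_1:M_1|_2-|G_2:M_2|_2=|G_3:M_3|_2-|G_4:M_4|_2.$$
   Context: Graphs are finite and may have multiple edges; trivalent means every vertex has degree $3$. $|G:M|_2$ denotes the number of $2$-factors (spanning subgraphs in which every vertex has degree $2$) of $G$ that contain every edge of $M$. A perfect matching drawing $\Gamma$ is a collection of trivalent vertices, edges and vertex-free closed curves drawn in the $2$-sphere by a generic immersion (transverse double points away from vertices, carrying no extra data), together with a set $M$ of edges forming a perfect matching of the vertices. For a matching edge $e=uv$ with other edge-ends $\alpha,\beta$ at $u$ and $\gamma,\delta$ at $v$ in cyclic order $\alpha,\beta,\delta,\gamma$ around a small disk about $e$, the $0$-resolution deletes $e,u,v$ and joins $\alpha$–$\gamma$ and $\beta$–$\delta$ by disjoint arcs, and the $1$-resolution joins $\alpha$–$\delta$ and $\beta$–$\gamma$ by two arcs crossing once. For a state $s:M\to\{0,1\}$, resolving every matching edge gives $c(s)$ immersed closed curves, and the $2$-factor bracket is $\langle\Gamma\rangle_2(z)=\sum_s(-z)^{|s|}(z+z^{-1})^{c(s)}\in\mathbb{Z}[z,z^{-1}]$, $|s|$ being the number of edges assigned $1$. *)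

From HB Require Import structures.
From mathcomp Require Import all_boot all_order all_algebra.
Set Implicit Arguments. Unset Strict Implicit. Unset Printing Implicit Defensive.
Import GRing.Theory.

(* N : finType indexes the matching edges.  Every matching edge e = uv has  *)
(* four outer edge-ends ("ports"), labelled by 'I_4 in the cyclic order     *)
(* alpha, beta, delta, gamma around a small disk about e:                   *)
(*   port 0 = alpha (at u), 1 = beta (at u), 2 = delta (at v), 3 = gamma (v)*)
(* A dart is a pair (n, p).  The non-matching edges pair darts:             *)
(* ed : dart -> dart is a fixed-point-free involution (ed x = other end of  *)
(* the edge through x; a loop at u pairs (n,0) with (n,1), etc.).           *)
(* Vertex-free closed curves are counted by a natural number k.             *)
(* Crossings carry no data and therefore do not appear.                     *)

Definition dart (N : finType) := (N * 'I_4)%type.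

Definition pA : 'I_4 := inord 0.
Definition pB : 'I_4 := inord 1.
Definition pD : 'I_4 := inord 2.
Definition pG : 'I_4 := inord 3.

Definition pm_drawing (N : finType) (ed : dart N -> dart N) : Prop :=
  involutive ed /\ (forall x, ed x != x).

(* 0-resolution: alpha--gamma, beta--delta *)
Definition res0 (p : 'I_4) : 'I_4 := inord (3 - p).
(* 1-resolution: alpha--delta, beta--gamma (two arcs crossing once) *)
Definition res1 (p : 'I_4) : 'I_4 := inord ((p + 2) %% 4).
(* alpha--beta, gamma--delta *)
Definition pairEq (p : 'I_4) : 'I_4 := inord (if odd p then p.-1 else p.+1).

(* Closed curves obtained when every matching edge n is replaced, inside   *)
(* its disk, by the arcs pairing its ports according to pr n: they are the *)
(* connected components of the graph on darts whose edges are the          *)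
(* non-matching edges (ed) and the local arcs (pr).                        *)
Definition curve_rel (N : finType) (ed : dart N -> dart N)
  (pr : N -> 'I_4 -> 'I_4) : rel (dart N) :=
  fun x y => (ed x == y) || ((y.1 == x.1) && (y.2 == pr x.1 x.2)).

Definition ncurves (N : finType) (ed : dart N -> dart N)
  (pr : N -> 'I_4 -> 'I_4) : nat :=
  n_comp (curve_rel ed pr) (@predT (dart N)).

Definition state_pairing (N : finType) (s : {ffun N -> bool}) (n : N) :=
  if s n then res1 else res0.

(* The 2-factor bracket <Gamma>_2, evaluated in any commutative ring R at  *)
(* z with inverse zi (take R = Z[z,z^-1] for the Laurent polynomial).      *)
Definition bracket2 (R : comNzRingType) (z zi : R) (N : finType)
  (ed : dart N -> dart N) (k : nat) : R :=
  (\sum_(s : {ffun N -> bool})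
     ((- z) ^+ #|[set n | s n]| * (z + zi) ^+ (ncurves ed (state_pairing s) + k))%R)%R.

(* Bracket of the drawing obtained by replacing the contents of the disk   *)
(* about the matching edge e by two disjoint arcs pairing the ports        *)
(* according to a (e is no longer a matching edge, so no state on e).      *)
Definition bracket2_arcs (R : comNzRingType) (z zi : R) (N : finType)
  (ed : dart N -> dart N) (k : nat) (e : N) (a : 'I_4 -> 'I_4) : R :=
  (\sum_(s : {ffun N -> bool} | ~~ s e)
     ((- z) ^+ #|[set n | s n]|
       * (z + zi) ^+ (ncurves ed (fun n => if n == e then a else state_pairing s n) + k))%R)%R.

(* IH-move at e.  The new matching edge e' = u'v' has alpha, gamma at u'   *)
(* and beta, delta at v'; in the cyclic order (alpha,beta,delta,gamma)     *)
(* around the disk its own ports are alpha' = gamma, beta' = alpha,        *)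
(* delta' = beta, gamma' = delta, i.e. new port q is old port q-1 mod 4.   *)
Definition ih_new2old (q : 'I_4) : 'I_4 := inord ((q + 3) %% 4).
Definition ih_old2new (p : 'I_4) : 'I_4 := inord ((p + 1) %% 4).
Definition ih_ed (N : finType) (e : N) (ed : dart N -> dart N) : dart N -> dart N :=
  fun x =>
    let x' := if x.1 == e then (x.1, ih_new2old x.2) else x in
    let y := ed x' in
    if y.1 == e then (y.1, ih_old2new y.2) else y.

(* Trivalent graphs with a perfect matching, same dart model (k = 0).      *)
(* Vertices are u_n (ports 0,1) and v_n (ports 2,3) of each matching edge  *)
(* n; non-matching edges are the ed-orbits.  A spanning subgraph containing *)
(* the matching is a set S of darts closed under ed (the chosen non-      *)
(* matching edges); it is a 2-factor iff each vertex has exactly one of    *)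
(* its two non-matching edge-ends in S.  A node n with pr n = Some a is not *)
(* a matching edge: its two vertices and e are deleted and the edges at    *)
(* ports p and a p are joined into one edge.                               *)
Definition is_2factor (N : finType) (ed : dart N -> dart N)
  (pr : N -> option ('I_4 -> 'I_4)) (S : {set dart N}) : bool :=
  [forall x, (x \in S) == (ed x \in S)] &&
  [forall n, match pr n with
             | None => (((n, pA) \in S) != ((n, pB) \in S))
                       && (((n, pD) \in S) != ((n, pG) \in S))
             | Some a => [forall p, ((n, p) \in S) == ((n, a p) \in S)]
             end].

Definition n2factors (N : finType) (ed : dart N -> dart N)
  (pr : N -> option ('I_4 -> 'I_4)) : nat :=
  #|[set S : {set dart N} | is_2factor ed pr S]|.

Definition all_matching (N : finType) : N -> option ('I_4 -> 'I_4) := fun _ => None.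
Definition arcs_at (N : finType) (e : N) (a : 'I_4 -> 'I_4) : N -> option ('I_4 -> 'I_4) :=
  fun n => if n == e then Some a else None.

From mathcomp Require Import all_boot all_order all_algebra.
From mathcomp Require Import zify.
Import GRing.Theory.

(* Both identities are local at e.  Relabelling the ports of the disk by
   (alpha, beta, delta, gamma) |-> (gamma, alpha, beta, delta) turns the IH-moved
   drawing back into the original one outside the disk.  Under this relabelling
   the 1-resolution of e' is the 1-resolution of e, while the 0-resolution of e'
   joins alpha--beta and gamma--delta, i.e. it is Gamma_=; the 0-resolution of e
   itself is Gamma_I.  Splitting the bracket sums according to the state of e
   gives (a).  For (b), count 2-factors as sets S of darts: away from e the four
   conditions coincide, and at e, writing a, b, d, g for the membership in S of
   the four edge-ends, the identity is
   [a != b /\ d != g] + [a = b /\ d = g] = [g != a /\ b != d] + [a = g /\ b = d]. *)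

Set Implicit Arguments.
Unset Strict Implicit.
Unset Printing Implicit Defensive.

Lemma n_comp_bij (T T' : finType) (r : rel T) (r' : rel T') (h : T' -> T) :
  bijective h -> connect_sym r -> connect_sym r' ->
  (forall x y, r' x y = r (h x) (h y)) -> n_comp r' predT = n_comp r predT.
Proof.
move=> [h' hK h'K] symr symr' rh.
have h_base : rel_base h r r' [predC predT] by move=> x y _; rewrite rh.
rewrite (@adjunction_n_comp _ _ h _ _ symr symr' predT) //.
apply: strict_adjunction => //; first exact: can_inj hK.
by apply/subsetP => x _; rewrite -[x]h'K codom_f.
Qed.

Lemma forallD1 (T : finType) (P : pred T) (x : T) :
  [forall y, P y] = P x && [forall (y | y != x), P y].
Proof.
apply/forallP/andP => [allP | [Px allP] y]; first by split; last apply/forall_inP.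
by have [->|] := eqVneq y x; last exact: (forall_inP allP).
Qed.

Lemma forall_I4 (P : 'I_4 -> Prop) : P pA -> P pB -> P pD -> P pG -> forall p, P p.
Proof.
move=> hA hB hD hG p; have -> : p = inord p by rewrite inord_val.
by case: p => [[|[|[|[|m]]]] ?].
Qed.

Lemma forall4 (P : pred 'I_4) : [forall p, P p] = [&& P pA, P pB, P pD & P pG].
Proof.
apply/forallP/and4P => [allP | [? ? ? ?]]; last exact: forall_I4.
by split; apply: allP.
Qed.

Ltac ord4_eval := apply/val_inj;
  rewrite /= ?(@inordK 3) //= ?(@inordK 3) //= ?(@inordK 3) //= ?(@inordK 3).

Lemma ih_old2newK : cancel ih_old2new ih_new2old. Proof. by apply: forall_I4; ord4_eval. Qed.
Lemma ih_new2oldK : cancel ih_new2old ih_old2new. Proof. by apply: forall_I4; ord4_eval. Qed.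
Lemma res0K : involutive res0. Proof. by apply: forall_I4; ord4_eval. Qed.
Lemma res1K : involutive res1. Proof. by apply: forall_I4; ord4_eval. Qed.
Lemma pairEqK : involutive pairEq. Proof. by apply: forall_I4; ord4_eval. Qed.

Lemma pairEqE : [/\ pairEq pA = pB, pairEq pB = pA, pairEq pD = pG & pairEq pG = pD].
Proof. by split; ord4_eval. Qed.
Lemma res0E : [/\ res0 pA = pG, res0 pB = pD, res0 pD = pB & res0 pG = pA].
Proof. by split; ord4_eval. Qed.
Lemma ih_new2oldE :
  [/\ ih_new2old pA = pG, ih_new2old pB = pA, ih_new2old pD = pB & ih_new2old pG = pD].
Proof. by split; ord4_eval. Qed.

Lemma res1_conj_ih : res1 =1 ih_old2new \o res1 \o ih_new2old.
Proof. by apply: forall_I4; ord4_eval. Qed.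

Lemma res0_conj_ih : res0 =1 ih_old2new \o pairEq \o ih_new2old.
Proof. by apply: forall_I4; ord4_eval. Qed.

Lemma curve_rel_sym (N : finType) (ed : dart N -> dart N) (pr : N -> 'I_4 -> 'I_4) :
  involutive ed -> (forall n, involutive (pr n)) -> symmetric (curve_rel ed pr).
Proof.
move=> edK prK [n p] [m q]; rewrite /curve_rel /=; congr orb.
  by apply/eqP/eqP => <-; rewrite edK.
by have [->|//] := eqVneq m n; apply/eqP/eqP => ->; rewrite prK.
Qed.

Lemma eq_ncurves (N : finType) (ed : dart N -> dart N) (pr1 pr2 : N -> 'I_4 -> 'I_4) :
  pr1 =2 pr2 -> ncurves ed pr1 = ncurves ed pr2.
Proof.
by move=> eq_pr; apply: eq_n_comp; apply: eq_connect => x y; rewrite /curve_rel eq_pr.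
Qed.

Section Relabel.
Variables (N : finType) (e : N).

Definition relabel_at (f : 'I_4 -> 'I_4) (x : dart N) : dart N :=
  if x.1 == e then (x.1, f x.2) else x.

Lemma relabel_at1 f x : (relabel_at f x).1 = x.1.
Proof. by rewrite /relabel_at; case: ifP. Qed.

Lemma relabel_at_id f n p : n != e -> relabel_at f (n, p) = (n, p).
Proof. by rewrite /relabel_at => /negPf ->. Qed.

Lemma relabel_atK f g : cancel f g -> cancel (relabel_at f) (relabel_at g).
Proof.
move=> fK [n p]; rewrite /relabel_at /=.
by have [->|/negPf ne] := eqVneq n e; rewrite /= ?eqxx ?fK ?ne.
Qed.

Variables (f g : 'I_4 -> 'I_4).
Hypotheses (fK : cancel f g) (gK : cancel g f).

Lemma ncurves_relabel (ed : dart N -> dart N) (pr pr' : N -> 'I_4 -> 'I_4) :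
  involutive ed -> (forall n, involutive (pr n)) ->
  (forall n, n != e -> pr' n = pr n) -> pr' e =1 g \o pr e \o f ->
  ncurves (relabel_at g \o ed \o relabel_at f) pr' = ncurves ed pr.
Proof.
move=> edK prK pr'_off pr'_e.
have pr'K n : involutive (pr' n).
  have [->|/pr'_off->//] := eqVneq n e.
  by move=> p; rewrite !pr'_e /= gK prK fK.
have ed'K : involutive (relabel_at g \o ed \o relabel_at f).
  by move=> x; rewrite /= (relabel_atK gK) edK (relabel_atK fK).
rewrite /ncurves; apply: (@n_comp_bij _ _ _ _ (relabel_at f)).
- by exists (relabel_at g); apply: relabel_atK.
- exact/sym_connect_sym/curve_rel_sym.
- exact/sym_connect_sym/curve_rel_sym.
move=> [n p] [m q]; rewrite /curve_rel !relabel_at1 /=; congr orb.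
  by rewrite (can2_eq (relabel_atK gK) (relabel_atK fK)).
have [->|//] := eqVneq m n; have [->|ne] := eqVneq n e.
  by rewrite /relabel_at /= eqxx /= pr'_e (can2_eq fK gK).
by rewrite !relabel_at_id // pr'_off.
Qed.
End Relabel.

Lemma ih_edE (N : finType) (e : N) (ed : dart N -> dart N) :
  ih_ed e ed = relabel_at e ih_old2new \o ed \o relabel_at e ih_new2old.
Proof. by []. Qed.

Definition port_ok (o : option ('I_4 -> 'I_4)) (b : 'I_4 -> bool) : bool :=
  if o is Some a then [forall p, b p == b (a p)] else (b pA != b pB) && (b pD != b pG).

Lemma eq_port_ok o (b b' : 'I_4 -> bool) : b =1 b' -> port_ok o b = port_ok o b'.
Proof.
move=> eq_b; case: o => [a|] /=; last by rewrite !eq_b.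
by apply: eq_forallb => p; rewrite !eq_b.
Qed.

Lemma port_ok_ih_skein (b : 'I_4 -> bool) :
  (port_ok None b + port_ok (Some pairEq) b
   = port_ok None (b \o ih_new2old) + port_ok (Some res0) b)%N.
Proof.
rewrite /port_ok /= !forall4.
have [-> -> -> ->] := pairEqE; have [-> -> -> ->] := res0E.
have [-> -> -> ->] := ih_new2oldE.
by case: (b pA); case: (b pB); case: (b pD); case: (b pG).
Qed.

Section TwoFactors.
Variables (N : finType) (e : N).

Definition ed_closed (ed : dart N -> dart N) (S : {set dart N}) : bool :=
  [forall x, (x \in S) == (ed x \in S)].

Definition ports_ok_off (S : {set dart N}) : bool :=
  [forall (n | n != e), port_ok None (fun p => (n, p) \in S)].

Lemma is_2factor_at (ed : dart N -> dart N) (pr : N -> option ('I_4 -> 'I_4))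
    (S : {set dart N}) : (forall n, n != e -> pr n = None) ->
  is_2factor ed pr S
  = [&& ed_closed ed S, port_ok (pr e) (fun p => (e, p) \in S) & ports_ok_off S].
Proof.
move=> pr_off; rewrite /is_2factor -/(ed_closed ed S); congr andb.
rewrite (forallD1 _ e); congr andb.
by apply: eq_forallb => n; apply/implyP/implyP=> okn /[dup] ne /okn; rewrite pr_off.
Qed.

Variables (f g : 'I_4 -> 'I_4).
Hypothesis gK : cancel g f.

Lemma ed_closed_relabel (ed : dart N -> dart N) (S : {set dart N}) :
  ed_closed (relabel_at e g \o ed \o relabel_at e f) (relabel_at e f @^-1: S)
  = ed_closed ed S.
Proof.
apply/forallP/forallP => closedS x.
  by have := closedS (relabel_at e g x); rewrite !inE /= !(relabel_atK e gK).
by rewrite !inE /= (relabel_atK e gK); apply: closedS.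
Qed.

Lemma ports_ok_off_relabel (S : {set dart N}) :
  ports_ok_off (relabel_at e f @^-1: S) = ports_ok_off S.
Proof.
apply: eq_forallb => n; apply: implyb_id2l => ne; apply: eq_port_ok => p.
by rewrite inE relabel_at_id.
Qed.

Lemma port_ok_relabel o (S : {set dart N}) :
  port_ok o (fun p => (e, p) \in relabel_at e f @^-1: S)
  = port_ok o ((fun p => (e, p) \in S) \o f).
Proof. by apply: eq_port_ok => p; rewrite inE /relabel_at /= eqxx. Qed.

End TwoFactors.

Lemma n2factorsE (N : finType) (ed : dart N -> dart N) (pr : N -> option ('I_4 -> 'I_4)) :
  n2factors ed pr = (\sum_(S : {set dart N}) is_2factor ed pr S)%N.
Proof.
by rewrite /n2factors -sum1dep_card big_mkcond; apply: eq_bigr => S _; case: ifP.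
Qed.

Lemma n2factors_ih (N : finType) (ed : dart N -> dart N) (e : N) :
  n2factors (ih_ed e ed) (@all_matching N)
  = (\sum_(S : {set dart N})
       is_2factor (ih_ed e ed) (@all_matching N) (relabel_at e ih_new2old @^-1: S))%N.
Proof.
have preimK : cancel (fun S : {set dart N} => relabel_at e ih_new2old @^-1: S)
                     (fun S => relabel_at e ih_old2new @^-1: S).
  by move=> S; apply/setP => x; rewrite !inE (relabel_atK e ih_old2newK).
by rewrite n2factorsE (reindex_inj (can_inj preimK)).
Qed.

Lemma n2factors_ih_skein (N : finType) (ed : dart N -> dart N) (e : N) :
  (n2factors ed (@all_matching N) + n2factors ed (arcs_at e pairEq)
   = n2factors (ih_ed e ed) (@all_matching N) + n2factors ed (arcs_at e res0))%N.
Proof.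
have all_off n : n != e -> @all_matching N n = None by [].
have arcs_off a n : n != e -> arcs_at e a n = None by rewrite /arcs_at => /negPf ->.
rewrite n2factors_ih !n2factorsE -!big_split; apply: eq_bigr => S _ /=.
rewrite !(is_2factor_at _ _ all_off) !(is_2factor_at _ _ (arcs_off _)).
rewrite ih_edE (ed_closed_relabel e ih_old2newK).
rewrite ports_ok_off_relabel port_ok_relabel.
rewrite /arcs_at eqxx /all_matching.
case: (ed_closed ed S); case: (ports_ok_off e S); rewrite ?andTb ?andbT ?andbF //.
exact: port_ok_ih_skein.
Qed.

Local Open Scope ring_scope.

Lemma sumrB_eq_on (R : zmodType) (I : finType) (P : pred I) (F G : I -> R) :
  (forall i, P i -> F i = G i) ->
  \sum_i F i - \sum_i G i = \sum_(i | ~~ P i) F i - \sum_(i | ~~ P i) G i.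
Proof.
move=> eqFG; rewrite (bigID P) [X in _ - X](bigID P) /= (eq_bigr G eqFG).
by rewrite opprD addrACA subrr add0r.
Qed.

Section Bracket.
Variables (N : finType) (ed : dart N -> dart N) (e : N).
Hypothesis edK : involutive ed.

Lemma state_pairingK (s : {ffun N -> bool}) n : involutive (state_pairing s n).
Proof. by rewrite /state_pairing; case: (s n); [exact: res1K | exact: res0K]. Qed.

Lemma ncurves_ih_res1 (s : {ffun N -> bool}) : s e ->
  ncurves (ih_ed e ed) (state_pairing s) = ncurves ed (state_pairing s).
Proof.
move=> se; rewrite ih_edE.
apply: (ncurves_relabel ih_new2oldK ih_old2newK edK (@state_pairingK s)) => [n _ //|].
rewrite /state_pairing se; exact: res1_conj_ih.
Qed.

Lemma ncurves_ih_res0 (s : {ffun N -> bool}) : ~~ s e ->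
  ncurves (ih_ed e ed) (state_pairing s)
  = ncurves ed (fun n => if n == e then pairEq else state_pairing s n).
Proof.
move=> se; rewrite ih_edE.
apply: (ncurves_relabel ih_new2oldK ih_old2newK edK) => [n | n /negPf -> | ].
- by case: eqP => _; [exact: pairEqK | exact: state_pairingK].
- by [].
rewrite /state_pairing (negPf se) eqxx; exact: res0_conj_ih.
Qed.

Lemma ncurves_res0 (s : {ffun N -> bool}) : ~~ s e ->
  ncurves ed (state_pairing s)
  = ncurves ed (fun n => if n == e then res0 else state_pairing s n).
Proof.
move=> se; apply: eq_ncurves => n p.
have [->|/negPf ne] := eqVneq n e; rewrite /= ?ne //.
by rewrite /state_pairing (negPf se).
Qed.

Lemma bracket2_ih_skein (R : comNzRingType) (z zi : R) k :
  bracket2 z zi ed k - bracket2 z zi (ih_ed e ed) k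
  = bracket2_arcs z zi ed k e res0 - bracket2_arcs z zi ed k e pairEq.
Proof.
rewrite /bracket2 /bracket2_arcs.
rewrite [LHS](@sumrB_eq_on _ _ (fun s : {ffun N -> bool} => s e)) => [|s se].
  apply: f_equal2; last apply: f_equal; apply: eq_bigr => s se.
    by rewrite (ncurves_res0 se).
  by rewrite (ncurves_ih_res0 se).
by rewrite (ncurves_ih_res1 se).
Qed.

End Bracket.

Theorem lemma2p3 (N : finType) (ed : dart N -> dart N) (e : N) :
  pm_drawing ed ->
  (* (a) *)
  (forall (R : comNzRingType) (z zi : R) (k : nat), z * zi = 1 ->
     bracket2 z zi ed k - bracket2 z zi (ih_ed e ed) k
     = bracket2_arcs z zi ed k e res0 - bracket2_arcs z zi ed k e pairEq)
  /\
  (* (b) *)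
  ((n2factors ed (@all_matching N))%:Z - (n2factors (ih_ed e ed) (@all_matching N))%:Z
   = (n2factors ed (arcs_at e res0))%:Z - (n2factors ed (arcs_at e pairEq))%:Z).
Proof.
move=> [edK _]; split=> [R z zi k _ | ]; first exact: bracket2_ih_skein.
have := n2factors_ih_skein ed e; lia.
Qed.
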